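(* Let $\hat R$ be the $4\times 4$ matrix $$\hat R=\begin{pmatrix}1&0&0&1\\0&1&-1&0\\0&1&1&0\\-1&0&0&1\end{pmatrix},$$ let $c$ be a complex-valued function on a multiplicatively closed set $G\subseteq\mathbb C\setminus\{0\}$ (e.g. $G=\mathbb C\setminus\{0\}$), and set $\hat R(x)=I+c(x)\hat R$. Then for all $x,y\in G$, $$\hat R_{(12)}(x)\hat R_{(23)}(xy)\hat R_{(12)}(y)-\hat R_{(23)}(y)\hat R_{(12)}(xy)\hat R_{(23)}(x)=\big(c(x)+c(y)+2c(x)c(y)-c(xy)\big)\big(\hat R_{(12)}-\hat R_{(23)}\big).$$ Consequently $\hat R(x)$ satisfies the parametrised Yang–Baxter equation $\hat R_{(12)}(x)\hat R_{(23)}(xy)\hat R_{(12)}(y)=\hat R_{(23)}(y)\hat R_{(12)}(xy)\hat R_{(23)}(x)$ for all $x,y\in G$ if and only if $c(x)+c(y)+2c(x)c(y)=c(xy)$ for all $x,y\in G$; in particular this holds for $c(x)=\tfrac12(x^p-1)$ for any integer $p$.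
   Context: $I$ is the identity matrix of the relevant size. For a $4\times4$ matrix $A$ acting on $\mathbb C^2\otimes\mathbb C^2$ (basis ordered $e_1\otimes e_1,e_1\otimes e_2,e_2\otimes e_1,e_2\otimes e_2$), $A_{(12)}=A\otimes I_2$ and $A_{(23)}=I_2\otimes A$ acting on $(\mathbb C^2)^{\otimes 3}$. *)

From HB Require Import structures.
From mathcomp Require Import all_boot all_order all_algebra.
From mathcomp Require Import complex mxtens.
Set Implicit Arguments. Unset Strict Implicit. Unset Printing Implicit Defensive.
Import Order.TTheory GRing.Theory Num.Theory.
Local Open Scope ring_scope.

(* Complex numbers: R[i] for a real closed field R (R[i] = C when R = the reals). *)

(* The 4x4 matrix \hat R, basis ordered e1e1, e1e2, e2e1, e2e2. *)
Definition Rhat_entries : seq (seq int) :=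
  [:: [:: 1; 0; 0; 1];
      [:: 0; 1; -1; 0];
      [:: 0; 1; 1; 0];
      [:: -1; 0; 0; 1]].

Definition Rhat (R : rcfType) : 'M[R[i]]_4 :=
  \matrix_(a < 4, b < 4) ((nth 0 (nth [::] Rhat_entries a) b)%:~R).

Definition Rhatx (R : rcfType) (c : R[i] -> R[i]) (x : R[i]) : 'M[R[i]]_4 :=
  1%:M + c x *: Rhat R.

(* A_(12) = A (x) I_2 and A_(23) = I_2 (x) A on (C^2)^{(x)3}; mxtens uses the
   row-major Kronecker convention (index (i,j) |-> i*n + j). *)
Definition M12 (K : pzRingType) (A : 'M[K]_4) : 'M[K]_8 := A *t (1%:M : 'M[K]_2).
Definition M23 (K : pzRingType) (A : 'M[K]_4) : 'M[K]_8 := (1%:M : 'M[K]_2) *t A.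

Definition YBE (R : rcfType) (c : R[i] -> R[i]) (x y : R[i]) : Prop :=
  M12 (Rhatx c x) *m M23 (Rhatx c (x * y)) *m M12 (Rhatx c y)
  = M23 (Rhatx c y) *m M12 (Rhatx c (x * y)) *m M23 (Rhatx c x).

From HB Require Import structures.
From mathcomp Require Import all_boot all_order all_algebra.
From mathcomp Require Import complex mxtens.
From mathcomp Require Import ring.
Import Order.TTheory GRing.Theory Num.Theory.
Local Open Scope ring_scope.

(* P := Rhat_(12) and Q := Rhat_(23) satisfy the braid relation PQP = QPQ and
   the same quadratic relation Rhat^2 = 2 Rhat - 2.  Expanding both triple
   products of the form (1 + a X)(1 + d Y)(1 + b X), the constant terms and
   the mixed terms aXY + bYX cancel, the cubic terms cancel by the braid
   relation, and the squares differ by 2ab(P - Q) by the quadratic relation;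
   what is left is a multiple of P - Q, which is nonzero.  For c(x) =
   (x^p - 1)/2 the functional equation says that 1 + 2c is multiplicative. *)

Section YangBaxterDefect.
Variables (K : comNzRingType) (A : algType K).
Implicit Types (a b d s t : K) (X Y P Q : A).

Lemma mul_1Z_1Z a b X :
  (1 + a *: X) * (1 + b *: X) = 1 + ((a + b) *: X + (a * b) *: (X * X)).
Proof.
rewrite mulrDl mul1r mulrDr mulr1 -scalerAl -scalerAr scalerA scalerDl.
by rewrite (addrC (a *: X) (b *: X)) !addrA.
Qed.

Lemma sandwich_1Z a b X Y :
  (1 + a *: X) * Y * (1 + b *: X) = Y + (a *: (X * Y) + b *: (Y * X) + (a * b) *: (X * Y * X)).
Proof.
by rewrite !(mulrDl, mulrDr, mul1r, mulr1, =^~ scalerAl, =^~ scalerAr, scalerA) !addrA.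
Qed.

Lemma mul_1Z_1Z_1Z a d b X Y :
  (1 + a *: X) * (1 + d *: Y) * (1 + b *: X)
  = (1 + a *: X) * (1 + b *: X) + d *: ((1 + a *: X) * Y * (1 + b *: X)).
Proof. by rewrite [_ * (1 + d *: Y)]mulrDr mulr1 mulrDl -scalerAr -scalerAl. Qed.

Lemma yang_baxter_defect s t a d b P Q :
  P * P = s *: P + t%:A -> Q * Q = s *: Q + t%:A -> P * Q * P = Q * P * Q ->
  (1 + a *: P) * (1 + d *: Q) * (1 + b *: P) - (1 + b *: Q) * (1 + d *: P) * (1 + a *: Q)
  = (a + b + s * a * b - d) *: (P - Q).
Proof.
move=> sqrP sqrQ braid.
(* Split each side by the coefficient of d: the d-free parts differ by the
   quadratic relation, the d-parts by the braid relation. *)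
have sqrPQ : P * P - Q * Q = s *: (P - Q).
  by rewrite sqrP sqrQ (addrC (s *: Q)) addrKA scalerBr.
have quad : (1 + a *: P) * (1 + b *: P) - (1 + b *: Q) * (1 + a *: Q)
            = (a + b + s * a * b) *: (P - Q).
  rewrite !mul_1Z_1Z (addrC b a) (mulrC b a) opprD addrACA subrr add0r.
  by rewrite opprD addrACA -!scalerBr sqrPQ scalerA -scalerDl (mulrC (a * b)) mulrA.
have mid : (1 + a *: P) * Q * (1 + b *: P) - (1 + b *: Q) * P * (1 + a *: Q) = Q - P.
  rewrite !sandwich_1Z braid (addrC (b *: _)) (mulrC b).
  by rewrite (addrC P) addrKA.
rewrite !mul_1Z_1Z_1Z opprD addrACA quad -scalerBr mid -(opprB P Q) scalerN.
by rewrite -scaleNr -scalerDl.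
Qed.
End YangBaxterDefect.

Lemma halfsubr1M (F : fieldType) (u v : F) : 2 != 0 :> F ->
  (u - 1) / 2 + (v - 1) / 2 + 2 * ((u - 1) / 2) * ((v - 1) / 2) = (u * v - 1) / 2.
Proof. by move=> two_neq0; field. Qed.

Section KroneckerEmbeddings.
Variable K : comPzRingType.
Implicit Types (a : K) (X Y : 'M[K]_4).

Lemma tensmx11 m n : (1%:M : 'M[K]_m) *t (1%:M : 'M[K]_n) = 1%:M.
Proof.
apply/matrixP=> i j.
case: (mxtens_indexP i) => i1 i2; case: (mxtens_indexP j) => j1 j2.
rewrite tensmxE !mxE (inj_eq (can_inj (@mxtens_indexK m n))) xpair_eqE.
by case: eqP; case: eqP; rewrite ?mulr1 ?mulr0.
Qed.

Lemma M12D X Y : M12 (X + Y) = M12 X + M12 Y.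
Proof. by apply/matrixP=> i j; rewrite !mxE mulrDl. Qed.
Lemma M23D X Y : M23 (X + Y) = M23 X + M23 Y.
Proof. by apply/matrixP=> i j; rewrite !mxE mulrDr. Qed.
Lemma M12Z a X : M12 (a *: X) = a *: M12 X.
Proof. by apply/matrixP=> i j; rewrite !mxE mulrA. Qed.
Lemma M23Z a X : M23 (a *: X) = a *: M23 X.
Proof. by apply/matrixP=> i j; rewrite !mxE mulrCA. Qed.
Lemma M12M X Y : M12 (X *m Y) = M12 X *m M12 Y.
Proof. by rewrite /M12 (tensmx_mul X (1%:M : 'M_2) Y 1%:M) mulmx1. Qed.
Lemma M23M X Y : M23 (X *m Y) = M23 X *m M23 Y.
Proof. by rewrite /M23 (tensmx_mul (1%:M : 'M_2) X 1%:M Y) mulmx1. Qed.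
Lemma M12_1 : M12 (1%:M : 'M[K]_4) = 1%:M.
Proof. exact: (@tensmx11 4 2). Qed.
Lemma M23_1 : M23 (1%:M : 'M[K]_4) = 1%:M.
Proof. exact: (@tensmx11 2 4). Qed.

End KroneckerEmbeddings.

Lemma M12_quadratic (K : comPzRingType) (s t : K) (X : 'M[K]_4) :
  X *m X = s *: X + t *: 1%:M -> M12 X *m M12 X = s *: M12 X + t *: 1%:M.
Proof. by move=> sqrX; rewrite -M12M sqrX M12D !M12Z M12_1. Qed.

Lemma M23_quadratic (K : comPzRingType) (s t : K) (X : 'M[K]_4) :
  X *m X = s *: X + t *: 1%:M -> M23 X *m M23 X = s *: M23 X + t *: 1%:M.
Proof. by move=> sqrX; rewrite -M23M sqrX M23D !M23Z M23_1. Qed.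

Lemma map_M12 (aR rR : pzRingType) (f : {rmorphism aR -> rR}) (X : 'M[aR]_4) :
  map_mx f (M12 X) = M12 (map_mx f X).
Proof. by apply/matrixP=> i j; rewrite !mxE rmorphM rmorph_nat. Qed.

Lemma map_M23 (aR rR : pzRingType) (f : {rmorphism aR -> rR}) (X : 'M[aR]_4) :
  map_mx f (M23 X) = M23 (map_mx f X).
Proof. by apply/matrixP=> i j; rewrite !mxE rmorphM rmorph_nat. Qed.

(* The matrix and big-operator constructors are locked, so concrete integer
   matrices are handled through their entry functions on nat, for which
   products and equality tests are closed computations. *)
Definition fun_mx n (f : nat -> nat -> int) : 'M[int]_n := \matrix_(i < n, j < n) f i j.

Definition fun_mul n (f g : nat -> nat -> int) i j :=
  foldr (fun k acc => f i k * g k j + acc) 0 (iota 0 n).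

Definition fun_eqb n (f g : nat -> nat -> int) :=
  all (fun i => all (fun j => f i j == g i j) (iota 0 n)) (iota 0 n).

Lemma fun_mxM n f g : fun_mx n f *m fun_mx n g = fun_mx n (fun_mul n f g).
Proof.
apply/matrixP=> i j; rewrite !mxE /fun_mul; under eq_bigr do rewrite !mxE.
rewrite -(big_mkord xpredT (fun k => f i k * g k j)) /index_iota subn0 unlock.
by elim: (iota 0 n) => //= k r ->.
Qed.

Lemma fun_mxD n f g : fun_mx n f + fun_mx n g = fun_mx n (fun i j => f i j + g i j).
Proof. by apply/matrixP=> i j; rewrite !mxE. Qed.

Lemma fun_mx1 n : 1%:M = fun_mx n (fun i j => (i == j)%:R).
Proof. by apply/matrixP=> i j; rewrite !mxE. Qed.

Lemma fun_mx_eq n f g : fun_eqb n f g -> fun_mx n f = fun_mx n g.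
Proof.
move=> /allP eq_fg; apply/matrixP=> i j; rewrite !mxE.
have in_iota (k : 'I_n) : (k : nat) \in iota 0 n by rewrite mem_iota /=.
have /allP eq_fg_i := eq_fg i (in_iota i).
exact/eqP/eq_fg_i/in_iota.
Qed.

Lemma M12_fun_mx f :
  M12 (fun_mx 4 f) = fun_mx 8 (fun i j => f (i %/ 2)%N (j %/ 2)%N * (i %% 2 == j %% 2)%N%:R).
Proof. by apply/matrixP=> i j; rewrite !mxE. Qed.

Lemma M23_fun_mx f :
  M23 (fun_mx 4 f) = fun_mx 8 (fun i j => (i %/ 4 == j %/ 4)%N%:R * f (i %% 4)%N (j %% 4)%N).
Proof. by apply/matrixP=> i j; rewrite !mxE. Qed.

Definition Rhat_int : 'M[int]_4 := fun_mx 4 (fun a b => nth 0 (nth [::] Rhat_entries a) b).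

Lemma Rhat_int_sqr : Rhat_int *m Rhat_int + 1%:M + 1%:M = Rhat_int + Rhat_int.
Proof. by rewrite fun_mx1 fun_mxM !fun_mxD; apply: fun_mx_eq; vm_compute. Qed.

Lemma Rhat_int_braid :
  M12 Rhat_int *m M23 Rhat_int *m M12 Rhat_int = M23 Rhat_int *m M12 Rhat_int *m M23 Rhat_int.
Proof. by rewrite M12_fun_mx M23_fun_mx !fun_mxM; apply: fun_mx_eq; vm_compute. Qed.

Section YangBaxterRhat.
Variable R : rcfType.
Local Notation P := (M12 (Rhat R)).
Local Notation Q := (M23 (Rhat R)).

Lemma Rhat_map : Rhat R = map_mx intr Rhat_int.
Proof. by apply/matrixP=> i j; rewrite !mxE. Qed.

Lemma Rhat_sqr : Rhat R *m Rhat R = 2 *: Rhat R + (-2) *: 1%:M.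
Proof.
have := congr1 (map_mx (intr : int -> R[i])) Rhat_int_sqr.
rewrite !map_mxD map_mxM map_mx1 -Rhat_map -!addrA => sqr_eq.
by rewrite -[LHS](addrK (1%:M + 1%:M)) sqr_eq scaleNr !scaler_nat !mulr2n.
Qed.

Lemma Rhat_braid : P *m Q *m P = Q *m P *m Q.
Proof.
have := congr1 (map_mx (intr : int -> R[i])) Rhat_int_braid.
by rewrite !map_mxM !map_M12 !map_M23 -Rhat_map.
Qed.

Lemma M12_Rhat_neq_M23 : P != Q.
Proof.
apply/eqP=> /matrixP/(_ (@Ordinal 8 0 isT) (@Ordinal 8 6 isT)) /eqP.
by rewrite !mxE /= mulr1 mul0r intr_eq0.
Qed.

Lemma Rhatx_yang_baxter_defect (c : R[i] -> R[i]) x y :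
  M12 (Rhatx c x) *m M23 (Rhatx c (x * y)) *m M12 (Rhatx c y)
  - M23 (Rhatx c y) *m M12 (Rhatx c (x * y)) *m M23 (Rhatx c x)
  = (c x + c y + 2 * c x * c y - c (x * y)) *: (P - Q).
Proof.
rewrite /Rhatx !(M12D, M23D, M12Z, M23Z, M12_1, M23_1) !mulmxE.
apply: yang_baxter_defect; rewrite -!mulmxE.
- exact/M12_quadratic/Rhat_sqr.
- exact/M23_quadratic/Rhat_sqr.
- exact: Rhat_braid.
Qed.

Lemma YBE_Rhatx (c : R[i] -> R[i]) x y :
  YBE c x y <-> c x + c y + 2 * c x * c y = c (x * y).
Proof.
have PQ_neq0 : P - Q != 0 by rewrite subr_eq0 M12_Rhat_neq_M23.
have defect := Rhatx_yang_baxter_defect c x y.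
rewrite /YBE; split=> [ybe | eqn]; last first.
  by apply/eqP; rewrite -subr_eq0 defect eqn subrr scale0r.
move: defect; rewrite ybe subrr => /esym/eqP.
by rewrite scaler_eq0 (negPf PQ_neq0) orbF subr_eq0 => /eqP.
Qed.

End YangBaxterRhat.

Theorem mainTheorem2 (R : rcfType) (G : {pred R[i]})
  (hG0 : forall x, x \in G -> x != 0)
  (hGM : forall x y, x \in G -> y \in G -> x * y \in G) :
  (forall c : R[i] -> R[i],
     (forall x y, x \in G -> y \in G ->
        M12 (Rhatx c x) *m M23 (Rhatx c (x * y)) *m M12 (Rhatx c y)
        - M23 (Rhatx c y) *m M12 (Rhatx c (x * y)) *m M23 (Rhatx c x)
        = (c x + c y + 2 * c x * c y - c (x * y)) *: (M12 (Rhat R) - M23 (Rhat R)))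
     /\
     ((forall x y, x \in G -> y \in G -> YBE c x y) <->
      (forall x y, x \in G -> y \in G -> c x + c y + 2 * c x * c y = c (x * y))))
  /\
  (forall p : int, forall x y, x \in G -> y \in G ->
     YBE (fun z : R[i] => (z ^ p - 1) / 2) x y).
Proof.
split=> [c | p x y Gx Gy].
  split=> [x y _ _ | ]; first exact: Rhatx_yang_baxter_defect.
  by split=> ybe x y Gx Gy; apply/YBE_Rhatx/ybe.
apply/YBE_Rhatx; rewrite exprzMl ?unitfE ?hG0 //.
by apply: halfsubr1M; rewrite pnatr_eq0.
Qed.
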